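(* Let $\mathcal X$ and $\mathcal Y$ be Banach spaces with a continuous embedding $\mathcal Y\subset\mathcal X^*$. Let $\mathcal U\subset\mathcal X$ be open, $\mathcal E:\mathcal U\to\mathbb R$ a $C^2$ function, and $x_\infty\in\mathcal U$ with $\mathcal E'(x_\infty)=0$. Let $\mathcal M:\mathcal U\to\mathcal Y$ be a $C^1$ gradient map for $\mathcal E$ and suppose $\mathcal E$ is Morse–Bott at $x_\infty$, so that $\mathcal U\cap\mathrm{Crit}\,\mathcal E$ is a relatively open smooth submanifold of $\mathcal X$ and $K:=\mathrm{Ker}\,\mathcal E''(x_\infty)=T_{x_\infty}\mathrm{Crit}\,\mathcal E$. Assume that $K$ has a closed complement $\mathcal X_0\subset\mathcal X$ and that $\mathrm{Ran}\,\mathcal M'(x_\infty)\subset\mathcal Y$ is closed. Then there are constants $Z\in(0,\infty)$ and $\sigma\in(0,1]$ such that every $x\in\mathcal U$ with $\|x-x_\infty\|_{\mathcal X}<\sigma$ satisfies $$\|\mathcal M(x)\|_{\mathcal Y}\geq Z\,|\mathcal E(x)-\mathcal E(x_\infty)|^{1/2}.$$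
   Context: Gradient map: a continuous map $\mathcal M:\mathcal U\to\mathcal Y$ is a gradient map for a $C^1$ function $\mathcal E$ if $\mathcal E'(x)v=\langle v,\mathcal M(x)\rangle_{\mathcal X\times\mathcal X^*}$ for all $x\in\mathcal U$, $v\in\mathcal X$. $\mathrm{Crit}\,\mathcal E=\{x:\mathcal E'(x)=0\}$; $\mathcal E''(x):\mathcal X\to\mathcal X^*$ is the Hessian. $\mathcal E$ is Morse–Bott at $x_0$ if some open neighborhood $\mathcal U$ of $x_0$ has $\mathcal U\cap\mathrm{Crit}\,\mathcal E$ a relatively open smooth submanifold and $T_{x_0}\mathrm{Crit}\,\mathcal E=\mathrm{Ker}\,\mathcal E''(x_0)$. *)

From HB Require Import structures.
From mathcomp Require Import all_boot all_order all_algebra.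
From mathcomp Require Import all_classical all_reals all_analysis.
Set Implicit Arguments. Unset Strict Implicit. Unset Printing Implicit Defensive.
Import Order.TTheory GRing.Theory Num.Theory.
Import numFieldNormedType.Exports.
Local Open Scope classical_set_scope.
Local Open Scope ring_scope.

(* Fréchet C^m / C^oo maps between normed spaces, via towers of        *)
(* bounded multilinear derivatives.  D k x t is the k-th Fréchet       *)
(* derivative of f at x applied to the k-tuple t (as a seq of length k).*)
(* Operator norms are expressed by uniformity over unit vectors.       *)

Definition unit_tuple (R : realType) (V : normedModType R) (k : nat) (t : seq V) :=
  size t = k /\ all (fun v => `|v| <= 1) t.

Definition multilinear (R : realType) (V W : normedModType R) (k : nat)
  (A : seq V -> W) :=
  forall (pre post : seq V), (size pre + size post).+1 = k ->
  forall (a : R) (u v : V),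
    A (pre ++ (a *: u + v) :: post) = a *: A (pre ++ u :: post) + A (pre ++ v :: post).

Definition bounded_multilinear (R : realType) (V W : normedModType R) (k : nat)
  (A : seq V -> W) :=
  exists C : R, forall t : seq V, size t = k -> `|A t| <= C * \prod_(v <- t) `|v|.

(* D is the tower of derivatives of f of orders 0..m on the set U, the  *)
(* m-th one being continuous (for the operator norm): f is C^m on U.    *)
Definition deriv_data (R : realType) (V W : normedModType R) (m : nat)
  (U : set V) (f : V -> W) (D : nat -> V -> seq V -> W) : Prop :=
  [/\ (forall x, U x -> D 0%N x [::] = f x),
      (forall (k : nat) x, (k <= m)%N -> U x ->
          multilinear k (D k x) /\ bounded_multilinear k (D k x)),
      (forall (k : nat) x, (k < m)%N -> U x -> forall e : R, 0 < e ->
          exists2 d : R, 0 < d & forall y, U y -> `|y - x| < d ->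
            forall t, unit_tuple k t ->
              `|D k y t - D k x t - D k.+1 x ((y - x) :: t)| <= e * `|y - x|)
    & (forall x, U x -> forall e : R, 0 < e ->
          exists2 d : R, 0 < d & forall y, U y -> `|y - x| < d ->
            forall t, unit_tuple m t -> `|D m y t - D m x t| <= e)].

Definition smooth_deriv (R : realType) (V W : normedModType R)
  (U : set V) (f : V -> W) (D : nat -> V -> seq V -> W) : Prop :=
  forall m : nat, deriv_data m U f D.

Definition smooth_on (R : realType) (V W : normedModType R) (U : set V) (f : V -> W) :=
  exists D, smooth_deriv U f D.

Definition lin_subspace (R : realType) (V : normedModType R) (F : set V) :=
  F 0 /\ forall (a : R) u v, F u -> F v -> F (a *: u + v).

Definition closed_subspace (R : realType) (V : normedModType R) (F : set V) :=
  lin_subspace F /\ closed F.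

Definition closed_complement (R : realType) (V : normedModType R) (K X0 : set V) :=
  [/\ closed_subspace X0, K `&` X0 = [set 0]
    & forall x, exists k x0, [/\ K k, X0 x0 & x = k + x0]].

Definition submanifold_chart (R : realType) (X : normedModType R) (S : set X) (p : X)
  (V W : set X) (phi psi : X -> X) (Dphi : nat -> X -> seq X -> X) (F : set X) :=
  [/\ open V, V p, open W, smooth_deriv V phi Dphi & smooth_on W psi] /\
  [/\ (forall x, V x -> W (phi x) /\ psi (phi x) = x),
      (forall y, W y -> V (psi y) /\ phi (psi y) = y),
      closed_subspace F
    & phi @` (S `&` V) = W `&` F].

Definition smooth_submanifold (R : realType) (X : normedModType R) (S : set X) :=
  forall p, S p -> exists V W phi psi Dphi F, @submanifold_chart R X S p V W phi psi Dphi F.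

(* T is the tangent space of S at p: T = (phi'(p))^{-1}(F) for a chart *)
(* (this is independent of the chart).                                 *)
Definition is_tangent_space (R : realType) (X : normedModType R) (S : set X) (p : X)
  (T : set X) :=
  exists V W phi psi Dphi F, @submanifold_chart R X S p V W phi psi Dphi F /\
    T = [set v | F (Dphi 1%N p [:: v])].

(* j y is the continuous linear functional on X corresponding to y.    *)

Definition continuous_embedding_dual (R : realType) (X Y : normedModType R)
  (j : Y -> X -> R) :=
  [/\ (forall (a : R) y y' x, j (a *: y + y') x = a * j y x + j y' x),
      (forall (a : R) y x x', j y (a *: x + x') = a * j y x + j y x'),
      (exists C : R, forall y x, `|j y x| <= C * `|y| * `|x|)
    & (forall y, (forall x, j y x = 0) -> y = 0)].

Definition gradient_map (R : realType) (X Y : normedModType R) (j : Y -> X -> R)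
  (U : set X) (DE : nat -> X -> seq X -> R) (M : X -> Y) :=
  {within U, continuous M} /\
  forall x, U x -> forall v, DE 1%N x [:: v] = j (M x) v.

Definition crit_set (R : realType) (X : normedModType R) (U : set X)
  (DE : nat -> X -> seq X -> R) : set X :=
  [set x | U x /\ forall v, DE 1%N x [:: v] = 0].

Definition hessian_kernel (R : realType) (X : normedModType R)
  (DE : nat -> X -> seq X -> R) (x : X) : set X :=
  [set v | forall w, DE 2%N x [:: v; w] = 0].

Definition morse_bott_at (R : realType) (X : normedModType R) (U : set X)
  (DE : nat -> X -> seq X -> R) (x0 : X) :=
  smooth_submanifold (crit_set U DE) /\
  is_tangent_space (crit_set U DE) x0 (hessian_kernel DE x0).

(* Write S for the critical set near x∞, A = M'(x∞) and d(x) for the distance from x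
   to S.  Since M vanishes on S and is Lipschitz near x∞, the mean value inequality
   along a segment from a critical point s gives |E x - E s| <= C |x - s|^2; the same
   quadratic bound along chart paths inside S shows that E is constant on S near x∞.
   Hence |E x - E x∞| <= C d(x)^2.
   Conversely |M x| >= c d(x).  The closed range of A yields, by the open mapping
   argument, dist(v, Ker A) <= C |A v|, and Ker A lies in Ker E''(x∞) = T S because
   E''(x∞)(v, w) = <w, A v>.  If |A (x - s)| were small for a nearly closest s, then
   x - s would be close to a tangent vector k, and the chart would produce a critical
   point near s + k that is closer to x than s.  Combining the two estimates gives
   |M x| >= Z |E x - E x∞|^(1/2). *)

From HB Require Import structures.
From mathcomp Require Import all_boot all_order all_algebra.
From mathcomp Require Import all_classical all_reals all_analysis.
From mathcomp Require Import ring lra.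
Import Order.TTheory GRing.Theory Num.Theory.
Import numFieldNormedType.Exports.
Local Open Scope classical_set_scope.
Local Open Scope ring_scope.

Set Implicit Arguments. Unset Strict Implicit. Unset Printing Implicit Defensive.

Section Prelim.
Variable R : realType.

Lemma exists_natSinv_lt (e : R) : 0 < e -> exists k : nat, k.+1%:R^-1 < e.
Proof.
move=> e0; exists (Num.truncn e^-1).
by rewrite -ltf_pV2 ?(posrE, divr_gt0) // ?invr_gt0 // invrK truncnS_gt.
Qed.

Lemma exists_div_exp2_lt (a e : R) : 0 < e -> exists k : nat, a / 2 ^+ k < e.
Proof.
move=> e0; have a1 : 0 < `|a| + 1 by rewrite ltr_wpDl.
have [k hk] := exists_natSinv_lt (divr_gt0 e0 a1); exists k.
have k2 : k.+1%:R <= (2 : R) ^+ k by rewrite -natrX ler_nat ltn_expl.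
have : `|a| + 1 < e * k.+1%:R by rewrite -ltr_pdivrMl // mulrC -ltf_pV2 ?posrE ?divr_gt0 // invf_div.
have : e * k.+1%:R <= e * 2 ^+ k by rewrite ler_pM2l.
have : a <= `|a| by apply: ler_norm.
rewrite ltr_pdivrMr ?exprn_gt0 //; lra.
Qed.

Lemma exists_pos_mul_lt (r c : R) : 0 < r -> 0 <= c -> exists2 s, 0 < s & s * c < r.
Proof.
move=> r0 c0; have c1 : 0 < c + 1 by rewrite ltr_wpDl.
exists (r / (c + 1)); first exact: divr_gt0.
by rewrite mulrAC ltr_pdivrMr // ltr_pM2l //; lra.
Qed.

Lemma ler_eps_mul (a b K : R) :
  (forall eta, 0 < eta <= 1 -> a <= b + eta * K) -> a <= b.
Proof.
move=> small; apply/ler_addgt0Pr => e e0.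
have K1 : 0 < `|K| + 1 by rewrite ltr_wpDl.
set eta := Num.min 1 (e / (`|K| + 1)).
have eta0 : 0 < eta by rewrite lt_min ltr01 divr_gt0.
have etaK : eta <= e / (`|K| + 1) by rewrite ge_min lexx orbT.
apply: (le_trans (small eta _)); first by rewrite eta0 ge_min lexx.
rewrite lerD2l; apply: (le_trans (ler_wpM2l (ltW eta0) (ler_norm K))).
apply: (le_trans (ler_wpM2r (normr_ge0 K) etaK)).
rewrite mulrAC ler_pdivrMr // ler_pM2l //; lra.
Qed.

Lemma norm_le_eps_eq0 (V : normedModType R) (x : V) (K : R) :
  (forall eta, 0 < eta <= 1 -> `|x| <= eta * K) -> x = 0.
Proof.
move=> small; apply/eqP; rewrite -normr_le0.
by apply: (ler_eps_mul (K := K)) => eta /small; rewrite add0r.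
Qed.

Lemma scaled_sqrt_le (a b c d K : R) : 0 <= K -> 0 <= d -> 0 < c ->
  a <= K * d ^+ 2 -> c * d <= b -> c / (Num.sqrt K + 1) * Num.sqrt a <= b.
Proof.
move=> K0 d0 c0 aK cdb; have sK0 := sqrtr_ge0 K; apply: le_trans cdb.
have sa : Num.sqrt a <= Num.sqrt K * d.
  have -> : Num.sqrt K * d = Num.sqrt (K * d ^+ 2).
    by rewrite (sqrtrM (d ^+ 2) K0) sqrtr_sqr ger0_norm.
  exact: ler_wsqrtr.
apply: (le_trans (ler_wpM2l _ sa)); first by rewrite ltW // divr_gt0 // ltr_wpDl.
have -> : c / (Num.sqrt K + 1) * (Num.sqrt K * d) = c * d * (Num.sqrt K / (Num.sqrt K + 1)).
  by field; lra.
rewrite -[leRHS]mulr1; apply: ler_wpM2l; first by rewrite mulr_ge0 // ltW.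
by rewrite ler_pdivrMr ?mul1r ?lerDl //; lra.
Qed.

Lemma subrACA (V : zmodType) (a b c d : V) : a - b - (c - d) = (a - c) - (b - d).
Proof. by rewrite !opprB addrACA [RHS]addrACA [- b - c]addrC. Qed.

Lemma ler_norm_approx (V : normedModType R) (a l : V) (c e t : R) :
  `|a - l| <= e * t -> `|l| <= c * t -> `|a| <= (c + e) * t.
Proof.
move=> al lt; rewrite mulrDl [c * t + _]addrC -[a](subrK l).
exact: le_trans (ler_normD _ _) (lerD al lt).
Qed.

Lemma open_norm_ballP (V : normedModType R) (O : set V) x :
  open O -> O x -> exists2 r, 0 < r & forall y, `|y - x| < r -> O y.
Proof.
move=> oO Ox.
have /nbhs_ballP [r r0 Hr] : nbhs x O by apply: open_nbhs_nbhs; split.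
by exists r => // y yx; apply: Hr; rewrite -ball_normE /ball_ /= distrC.
Qed.

Definition approx_closed (V : normedModType R) (S : set V) :=
  forall y, (forall e, 0 < e -> exists2 z, S z & `|y - z| < e) -> S y.

Lemma closed_approx_closed (V : normedModType R) (S : set V) :
  closed S -> approx_closed S.
Proof.
move=> cS y Hy; apply: cS => B /nbhs_ballP [e e0 He].
have [z Sz yz] := Hy e e0; exists z; split => //; apply: He.
by rewrite -ball_normE /ball_ /=.
Qed.

Lemma norm_ball_segment (V : normedModType R) (x0 a b : V) (rho t : R) :
  `|a - x0| < rho -> `|b - x0| < rho -> 0 <= t <= 1 ->
  `|a + t *: (b - a) - x0| < rho.
Proof.
move=> ha hb /andP[t0 t1].
have -> : a + t *: (b - a) - x0 = (1 - t) *: (a - x0) + t *: (b - x0).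
  have conv (v w : V) : (1 - t) *: v + t *: w = v + t *: (w - v).
    by rewrite scalerBl scale1r scalerBr addrAC addrA.
  by rewrite conv (opprB a x0) addrA subrK addrAC.
apply: (le_lt_trans (ler_normD _ _)); rewrite !normrZ !ger0_norm ?subr_ge0 //.
set m := Num.max `|a - x0| `|b - x0|.
have m1 : `|a - x0| <= m by rewrite le_max lexx.
have m2 : `|b - x0| <= m by rewrite le_max lexx orbT.
have m3 : m < rho by rewrite gt_max ha hb.
have h1 : (1 - t) * `|a - x0| <= (1 - t) * m by apply: ler_wpM2l; rewrite ?subr_ge0.
have h2 : t * `|b - x0| <= t * m by apply: ler_wpM2l.
lra.
Qed.

End Prelim.

Section LinearFun.
Variables (R : realType) (V W : normedModType R) (A : V -> W).
Hypothesis Alin : linear A.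

Lemma linfun0 : A 0 = 0.
Proof.
have := Alin 1 0 0; rewrite scaler0 addr0 scale1r => h.
by apply: (addrI (A 0)); rewrite addr0 -h.
Qed.

Lemma linfunZ (a : R) u : A (a *: u) = a *: A u.
Proof. by have := Alin a u 0; rewrite !addr0 linfun0 addr0. Qed.

Lemma linfunD u v : A (u + v) = A u + A v.
Proof. by have := Alin 1 u v; rewrite !scale1r. Qed.

Lemma linfunB u v : A (u - v) = A u - A v.
Proof. by rewrite linfunD -scaleN1r linfunZ scaleN1r. Qed.

Lemma linear_unit_bound (e : R) :
  (forall u, `|u| <= 1 -> `|A u| <= e) -> forall h, `|A h| <= e * `|h|.
Proof.
move=> Hb h; have [->|hn0] := eqVneq h 0; first by rewrite linfun0 !normr0 mulr0.
have nh : 0 < `|h| by rewrite normr_gt0.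
set u := `|h|^-1 *: h.
have hu : h = `|h| *: u by rewrite /u scalerA divff ?gt_eqF // scale1r.
rewrite {1}hu linfunZ normrZ normr_id mulrC; apply: ler_wpM2r => //.
by apply: Hb; rewrite /u normrZ normfV normr_id mulVf ?gt_eqF.
Qed.

End LinearFun.

Section FirstDerivative.
Variables (R : realType) (V W : normedModType R).

Definition frechet_within (O : set V) (f : V -> W) (x : V) (L : V -> W) :=
  forall e, 0 < e -> exists2 d, 0 < d & forall y, O y -> `|y - x| < d ->
    `|f y - f x - L (y - x)| <= e * `|y - x|.

Lemma multilinear1_linear (A : seq V -> W) :
  multilinear 1 A -> linear (fun h => A [:: h]).
Proof. by move=> H a u v; have := H [::] [::] erefl a u v. Qed.

Lemma bounded_multilinear1 (A : seq V -> W) : bounded_multilinear 1 A ->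
  exists2 c, 0 <= c & forall h, `|A [:: h]| <= c * `|h|.
Proof.
move=> [C HC]; exists (Num.max C 0); first by rewrite le_max lexx orbT.
move=> h; have := HC [:: h] erefl; rewrite big_seq1 => H.
by apply: (le_trans H); apply: ler_wpM2r => //; rewrite le_max lexx.
Qed.

Variables (m : nat) (O : set V) (f : V -> W) (D : nat -> V -> seq V -> W).
Hypotheses (Df : deriv_data m O f D) (m_gt0 : (0 < m)%N).

Lemma deriv1_linear x : O x -> linear (fun h => D 1%N x [:: h]).
Proof. by case: Df => _ H _ _ Ox; apply: multilinear1_linear; case: (H 1%N x m_gt0 Ox). Qed.

Lemma deriv1_bounded x : O x ->
  exists2 c, 0 <= c & forall h, `|D 1%N x [:: h]| <= c * `|h|.
Proof. by case: Df => _ H _ _ Ox; apply: bounded_multilinear1; case: (H 1%N x m_gt0 Ox). Qed.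

Lemma deriv_frechet x : O x -> frechet_within O f x (fun h => D 1%N x [:: h]).
Proof.
case: Df => D0 _ Ddiff _ Ox e e0; have [d d0 Hd] := Ddiff 0%N x m_gt0 Ox e e0.
exists d => // y Oy yx.
by have := Hd y Oy yx [::] (conj erefl isT); rewrite !D0.
Qed.

End FirstDerivative.

Section MeanValueInterval.
Variables (R : realType) (Z : normedModType R) (h : R -> Z) (B e : R).
Hypothesis hB : forall t, 0 <= t <= 1 -> exists2 d, 0 < d &
  forall t', 0 <= t' <= 1 -> `|t' - t| < d -> `|h t' - h t| <= (B + e) * `|t' - t|.

(* Continuous induction: the set of s up to which the estimate with slope B + e holds
   contains its supremum, and a supremum below 1 could be pushed further. *)
Let good s := 0 <= s <= 1 /\ forall u, 0 <= u <= s -> `|h u - h 0| <= (B + e) * u.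

Let good0 : good 0.
Proof.
split; first by rewrite lexx ler01.
move=> u /andP[u0 u1]; have -> : u = 0 by apply/le_anti; rewrite u0 u1.
by rewrite subrr normr0 mulr0.
Qed.

Let good_sup : has_sup good.
Proof. by split; [exists 0 | exists 1 => s [/andP[]]]. Qed.

Let sup_good_ge0 : 0 <= sup good.
Proof. exact: sup_upper_bound. Qed.

Let sup_good_le1 : sup good <= 1.
Proof. by apply: ge_sup; [exists 0 | move=> x [/andP[]]]. Qed.

Let good_sup_mem : good (sup good).
Proof.
move: sup_good_ge0 sup_good_le1; set s := sup good => s0 s1.
split; first by rewrite s0 s1.
have below u : 0 <= u < s -> `|h u - h 0| <= (B + e) * u.
  move=> /andP[u0 us].
  have [g [_ Hg] ug] : exists2 g, good g & s - (s - u) < g.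
    by apply: sup_adherent => //; rewrite subr_gt0.
  by apply: Hg; rewrite u0 /=; apply: ltW; rewrite opprB addrCA subrr addr0 in ug.
move=> u /andP[u0 us]; have [us'|su] := ltP u s; first by apply: below; rewrite u0.
have {su us} -> : u = s by apply/le_anti; rewrite us su.
have [->|sn0] := eqVneq s 0; first by rewrite subrr normr0 mulr0.
have sp : 0 < s by rewrite lt_neqAle eq_sym sn0 s0.
have [d d0 Hd] := @hB s (ltac:(by rewrite s0 s1)).
pose u' := Num.max 0 (s - d / 2).
have u'0 : 0 <= u' by rewrite le_max lexx.
have u's : u' < s by rewrite gt_max sp /=; lra.
have su' : s - d / 2 <= u' by rewrite le_max lexx orbT.
have H1 := below u' (ltac:(by rewrite u'0 u's)).
have H2 := Hd u' (ltac:(rewrite u'0 /=; lra))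
  (ltac:(rewrite distrC ger0_norm; lra)).
rewrite (distrC u') ger0_norm in H2; last lra.
apply: (le_trans (ler_distD (h u') _ _)).
have -> : (B + e) * s = (B + e) * (s - u') + (B + e) * u' by ring.
by apply: lerD => //; rewrite distrC.
Qed.

Let sup_good_eq1 : sup good = 1.
Proof.
have [_ Gs] := good_sup_mem.
move: sup_good_ge0 sup_good_le1 Gs; set s := sup good => s0 s_le1 Gs.
apply/le_anti; rewrite s_le1 /= leNgt; apply/negP => s1.
have [d d0 Hd] := @hB s (ltac:(by rewrite s0 s_le1)).
pose t' := Num.min 1 (s + d / 2).
have st' : s < t' by rewrite lt_min s1 /=; lra.
have t'1 : t' <= 1 by rewrite ge_min lexx.
have t'sd : t' <= s + d / 2 by rewrite ge_min lexx orbT.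
suff : good t' by move=> /(sup_upper_bound good_sup); rewrite -/s; lra.
split; first by rewrite t'1 andbT; lra.
move=> u /andP[u0 ut']; have [us|su] := leP u s; first by apply: Gs; rewrite u0.
have H1 : `|h s - h 0| <= (B + e) * s by apply: Gs; rewrite s0 lexx.
have H2 := Hd u (ltac:(rewrite u0 /=; lra)) (ltac:(rewrite ger0_norm; lra)).
rewrite ger0_norm in H2; last lra.
apply: (le_trans (ler_distD (h s) _ _)).
have -> : (B + e) * u = (B + e) * (u - s) + (B + e) * s by ring.
exact: lerD.
Qed.

Lemma mvi_interval_eps : `|h 1 - h 0| <= B + e.
Proof.
have [_] := good_sup_mem; rewrite sup_good_eq1 => /(_ 1).
by rewrite ler01 lexx mulr1; apply.
Qed.

End MeanValueInterval.

Section MeanValue.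
Variable R : realType.

Lemma mvi_interval (Z : normedModType R) (h : R -> Z) (B : R) :
  (forall t, 0 <= t <= 1 -> forall e, 0 < e -> exists2 d, 0 < d &
     forall t', 0 <= t' <= 1 -> `|t' - t| < d ->
       `|h t' - h t| <= (B + e) * `|t' - t|) ->
  `|h 1 - h 0| <= B.
Proof.
move=> hB; apply/ler_addgt0Pr => e e0.
by apply: mvi_interval_eps => t t01; apply: hB.
Qed.

Lemma mvi_segment (X Z : normedModType R) (O : set X) (f : X -> Z)
    (Df : X -> X -> Z) (x y : X) (B : R) :
  (forall t, 0 <= t <= 1 -> O (x + t *: (y - x))) ->
  (forall t, 0 <= t <= 1 -> let z := x + t *: (y - x) in
     frechet_within O f z (Df z) /\
     forall a : R, `|Df z (a *: (y - x))| <= B * `|a| * `|y - x|) ->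
  `|f y - f x| <= B * `|y - x|.
Proof.
move=> Oseg Hd; pose h t := f (x + t *: (y - x)).
have -> : f y = h 1 by rewrite /h scale1r addrC subrK.
have -> : f x = h 0 by rewrite /h scale0r addr0.
apply: mvi_interval => t t01 e e0.
set N := `|y - x| + 1.
have N0 : 0 < N by rewrite /N ltr_wpDl.
have [Hdd HB] := Hd t t01.
have [d d0 Hd'] := Hdd (e / N) (divr_gt0 e0 N0).
exists (d / N); first exact: divr_gt0.
move=> t' t'01 tt'; set z := x + t *: (y - x).
have zz : x + t' *: (y - x) - z = (t' - t) *: (y - x).
  by rewrite /z scalerBl opprD addrACA subrr add0r.
have nz : `|x + t' *: (y - x) - z| = `|t' - t| * `|y - x| by rewrite zz normrZ.
have yxN : `|y - x| <= N by rewrite /N lerDl.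
have nzd : `|x + t' *: (y - x) - z| < d.
  rewrite nz; apply: (le_lt_trans (y := `|t' - t| * N)); first exact: ler_wpM2l.
  by rewrite -ltr_pdivlMr.
have H1 := Hd' _ (Oseg t' t'01) nzd.
have H2 := HB (t' - t); rewrite -zz in H2.
have H3 : e / N * `|x + t' *: (y - x) - z| <= e * `|t' - t|.
  rewrite nz; have -> : e / N * (`|t' - t| * `|y - x|) = e * `|t' - t| * (`|y - x| / N) by ring.
  rewrite -[X in _ <= X]mulr1; apply: ler_wpM2l; first exact: mulr_ge0 (ltW e0) (normr_ge0 _).
  by rewrite ler_pdivrMr // mul1r.
rewrite /h -/z; move: H1 H2 H3.
set fz' := f (x + t' *: (y - x)); set L := Df z _.
have tri : `|fz' - f z| <= `|fz' - f z - L| + `|L|.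
  by rewrite -{1}(subrK L (fz' - f z)) ler_normD.
have : (B * `|y - x| + e) * `|t' - t| = B * `|t' - t| * `|y - x| + e * `|t' - t| by ring.
lra.
Qed.

End MeanValue.

Section StrictDerivative.
Variables (R : realType) (V W : normedModType R).

Lemma frechet_within_subset (O O' : set V) (f : V -> W) x L :
  O' `<=` O -> frechet_within O f x L -> frechet_within O' f x L.
Proof. by move=> O'O fx e /fx [d d0 Hd]; exists d => // y /O'O; apply: Hd. Qed.

Lemma frechet_within_subr (O : set V) (f L : V -> W) x Lx :
  linear L -> frechet_within O f x Lx ->
  frechet_within O (fun y => f y - L y) x (fun h => Lx h - L h).
Proof.
move=> Llin fx e /fx [d d0 Hd]; exists d => // y Oy yx.
by rewrite (linfunB Llin) (subrACA (f y)) (subrACA (f y - f x)) subrr subr0; apply: Hd.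
Qed.

Lemma deriv_strict (O : set V) (f : V -> W) (D : nat -> V -> seq V -> W) x0 :
  deriv_data 1 O f D -> open O -> O x0 ->
  forall e, 0 < e -> exists2 rho, 0 < rho & (forall y, `|y - x0| < rho -> O y) /\
    forall a b, `|a - x0| < rho -> `|b - x0| < rho ->
      `|f b - f a - D 1%N x0 [:: b - a]| <= e * `|b - a|.
Proof.
move=> Df oO Ox0 e e0.
have [r r0 Hr] := open_norm_ballP oO Ox0.
have [_ _ _ Dcont] := Df; have [d d0 Hd] := Dcont x0 Ox0 e e0.
set rho := Num.min r d.
have rho0 : 0 < rho by rewrite lt_min r0 d0.
have ball_O y : `|y - x0| < rho -> O y.
  by move=> hy; apply: Hr; apply: (lt_le_trans hy); rewrite ge_min lexx.
exists rho => //; split => // a b ha hb.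
pose L h := D 1%N x0 [:: h].
have Llin : linear L := deriv1_linear Df isT Ox0.
rewrite -/(L (b - a)) (linfunB Llin) -subrACA.
apply: (mvi_segment (O := fun z => `|z - x0| < rho) (f := fun z => f z - L z)
  (Df := fun z h => D 1%N z [:: h] - L h)).
  by move=> t t01; apply: norm_ball_segment.
move=> t t01 z; have zb : `|z - x0| < rho by apply: norm_ball_segment.
split.
  apply: frechet_within_subr => //; apply: (frechet_within_subset ball_O).
  exact: (deriv_frechet Df isT (ball_O z zb)).
move=> c; rewrite -mulrA -normrZ.
apply: (linear_unit_bound (A := fun h => D 1%N z [:: h] - L h)) => [c' u u'|u u1].
  by rewrite (deriv1_linear Df isT (ball_O z zb)) Llin scalerBr opprD addrACA.
apply: (Hd z (ball_O z zb)); first by apply: (lt_le_trans zb); rewrite ge_min lexx orbT.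
by split => //=; rewrite u1.
Qed.

Lemma strict_lipschitz (f L : V -> W) x0 (rho c e : R) :
  (forall h, `|L h| <= c * `|h|) ->
  (forall a b, `|a - x0| < rho -> `|b - x0| < rho ->
     `|f b - f a - L (b - a)| <= e * `|b - a|) ->
  forall a b, `|a - x0| < rho -> `|b - x0| < rho -> `|f b - f a| <= (c + e) * `|b - a|.
Proof. by move=> HL Hs a b ha hb; apply: ler_norm_approx (Hs a b ha hb) (HL _). Qed.

Lemma frechet_lipschitz_at (O : set V) (f B : V -> W) p (cB : R) :
  (forall h, `|B h| <= cB * `|h|) -> frechet_within O f p B ->
  exists2 r, 0 < r & forall x, O x -> `|x - p| < r -> `|f x - f p| <= (cB + 1) * `|x - p|.
Proof.
move=> HcB /(_ 1 ltr01) [r r0 Hr]; exists r => // x Ox xp.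
exact: ler_norm_approx (Hr x Ox xp) (HcB _).
Qed.

Lemma frechet_left_inverse (O : set V) (O' : set W) (f : V -> W) (g : W -> V)
    (B : V -> W) (Q : W -> V) (cB cQ : R) p :
  linear B -> linear Q -> 0 <= cB -> 0 <= cQ ->
  (forall h, `|B h| <= cB * `|h|) -> (forall h, `|Q h| <= cQ * `|h|) ->
  open O -> O p -> frechet_within O f p B -> frechet_within O' g (f p) Q ->
  (forall x, O x -> O' (f x) /\ g (f x) = x) ->
  forall v, Q (B v) = v.
Proof.
move=> Blin Qlin cB0 cQ0 HcB HcQ oO Op fp gfp gf v.
apply/eqP; rewrite -subr_eq0; apply/eqP.
apply: (norm_le_eps_eq0 (K := `|v| * (cQ + cB + 1))) => eta /andP[eta0 _].
have [r r0 Hr] := open_norm_ballP oO Op.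
have [r1 r10 Hf] := fp eta eta0.
have [r2 r20 Hg] := gfp eta eta0.
have [r3 r30 Lf] := frechet_lipschitz_at HcB fp.
have cB1 : 0 < cB + 1 by rewrite ltr_wpDl.
set m := Num.min (Num.min r r1) (Num.min r3 (r2 / (cB + 1))).
have [s s0 sm] := exists_pos_mul_lt (r := m) (c := `|v|)
  (ltac:(by rewrite !lt_min r0 r10 r30 divr_gt0)) (normr_ge0 v).
have [mr mr1 mr3 mr2] : [/\ m <= r, m <= r1, m <= r3 & m <= r2 / (cB + 1)].
  by rewrite !ge_min !lexx !orbT.
set x := p + s *: v.
have xp : x - p = s *: v by rewrite /x addrC addKr.
have nxp : `|x - p| = s * `|v| by rewrite xp normrZ gtr0_norm.
have Ox : O x by apply: Hr; lra.
have E1 : `|f x - f p - s *: B v| <= eta * (s * `|v|).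
  by rewrite -(linfunZ Blin) -xp -nxp; apply: Hf => //; lra.
set h := f x - f p.
have nh : `|h| <= (cB + 1) * (s * `|v|) by rewrite -nxp; apply: Lf => //; lra.
have E2 : `|s *: v - Q h| <= eta * `|h|.
  have [Ofx gfx] := gf x Ox; have [_ gfp'] := gf p Op.
  have hr2 : `|h| < r2.
    apply: (le_lt_trans nh); rewrite mulrC -ltr_pdivlMr //; lra.
  by have := Hg (f x) Ofx; rewrite gfx gfp' -/h xp; apply.
have : `|s *: (Q (B v) - v)| <= s * (eta * (`|v| * (cQ + cB + 1))).
  have -> : s *: (Q (B v) - v) = Q (s *: B v - h) - (s *: v - Q h).
    by rewrite (linfunB Qlin) (linfunZ Qlin) opprB addrA subrK scalerBr.
  apply: (le_trans (ler_normB _ _)).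
  have : `|Q (s *: B v - h)| <= cQ * (eta * (s * `|v|)).
    by apply: (le_trans (HcQ _)); rewrite ler_wpM2l // distrC.
  have : eta * `|h| <= eta * ((cB + 1) * (s * `|v|)) by rewrite ler_pM2l.
  have : s * (eta * (`|v| * (cQ + cB + 1))) =
    cQ * (eta * (s * `|v|)) + eta * ((cB + 1) * (s * `|v|)) by ring.
  lra.
by rewrite normrZ gtr0_norm // ler_pM2l.
Qed.

End StrictDerivative.

Section DualEmbedding.
Variables (R : realType) (X Y : normedModType R) (j : Y -> X -> R).
Hypothesis Hj : continuous_embedding_dual j.

Lemma dual_embedding_linear x : linear (fun y => j y x).
Proof. by case: Hj => jl _ _ _ a y y'; apply: jl. Qed.

Lemma dual_embedding_bound :
  exists2 C, 0 <= C & forall y x, `|j y x| <= C * `|y| * `|x|.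
Proof.
case: Hj => _ _ [C HC] _; exists (Num.max C 0); first by rewrite le_max lexx orbT.
move=> y x; apply: (le_trans (HC y x)); rewrite -!mulrA.
by apply: ler_wpM2r; rewrite ?mulr_ge0 // le_max lexx.
Qed.

End DualEmbedding.

Section GradientMap.
Variables (R : realType) (X Y : normedModType R) (j : Y -> X -> R) (U : set X).
Variables (E : X -> R) (DE : nat -> X -> seq X -> R).
Variables (M : X -> Y) (DM : nat -> X -> seq X -> Y).
Hypotheses (Hj : continuous_embedding_dual j) (oU : open U).
Hypotheses (HE : deriv_data 2 U E DE) (HM : deriv_data 1 U M DM).
Hypothesis grad : forall x, U x -> forall v, DE 1%N x [:: v] = j (M x) v.

(* Both sides are the derivative at p of x |-> E'(x) w = j (M x) w in the direction v. *)
Lemma hessian_gradient p : U p -> forall v w, DE 2%N p [:: v; w] = j (DM 1%N p [:: v]) w.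
Proof.
move=> Up v; have [_ E2lin _ _] := HE; have [E2 _] := E2lin 2%N p isT Up.
have [Cj Cj0 HCj] := dual_embedding_bound Hj.
have jlin := dual_embedding_linear Hj.
have Alin := deriv1_linear HM isT Up.
pose G w := DE 2%N p [:: v; w] - j (DM 1%N p [:: v]) w.
have E2l w : linear (fun u => DE 2%N p [:: u; w]) := E2 [::] [:: w] erefl.
have Glin : linear G.
  move=> a u u'; rewrite /G; have /= -> := E2 [:: v] [::] erefl a u u'.
  by case: Hj => _ jr _ _; rewrite jr /GRing.scale /=; ring.
suff G0 w : `|w| <= 1 -> G w = 0.
  move=> w; apply/eqP; rewrite -subr_eq0 -normr_le0 -(mul0r `|w|) -/(G w).
  by apply: linear_unit_bound => // u /G0 ->; rewrite normr0.
move=> w1; apply: (norm_le_eps_eq0 (K := `|v| * (1 + Cj))) => eta /andP[eta0 _].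
have [_ _ Ediff _] := HE; have [d1 d10 H1] := Ediff 1%N p isT Up eta eta0.
have [d2 d20 H2] := deriv_frechet HM isT Up eta0.
have [r r0 Hr] := open_norm_ballP oU Up.
have [s s0 sm] := exists_pos_mul_lt (r := Num.min r (Num.min d1 d2)) (c := `|v|)
  (ltac:(by rewrite !lt_min r0 d10 d20)) (normr_ge0 v).
have [mr md1 md2] : [/\ Num.min r (Num.min d1 d2) <= r, Num.min r (Num.min d1 d2) <= d1
  & Num.min r (Num.min d1 d2) <= d2] by rewrite !ge_min !lexx !orbT.
set y := p + s *: v.
have yp : y - p = s *: v by rewrite /y addrC addKr.
have nyp : `|y - p| = s * `|v| by rewrite yp normrZ gtr0_norm.
have Uy : U y by apply: Hr; lra.
have uw : unit_tuple 1 [:: w] by split => //=; rewrite w1.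
have T1 := H1 y Uy (ltac:(lra)) [:: w] uw.
rewrite !grad // yp (linfunZ (E2l w)) normrZ gtr0_norm // in T1.
have T2 := H2 y Uy (ltac:(lra)); rewrite /= yp (linfunZ Alin) normrZ gtr0_norm // in T2.
have T3 : `|j (M y - M p - s *: DM 1%N p [:: v]) w| <= Cj * (eta * (s * `|v|)).
  apply: (le_trans (HCj _ _)); rewrite -mulrA ler_wpM2l //.
  by rewrite -[leRHS]mulr1; apply: ler_pM.
rewrite !(linfunB (jlin w)) (linfunZ (jlin w)) in T3.
have : `|s * G w| <= s * (eta * (`|v| * (1 + Cj))).
  have -> : s * G w = (j (M y) w - j (M p) w - s *: j (DM 1%N p [:: v]) w) -
     (j (M y) w - j (M p) w - s *: DE 2%N p [:: v; w]).
    by rewrite /G /GRing.scale /=; ring.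
  apply: (le_trans (ler_normB _ _)); move: T1 T3.
  have : s * (eta * (`|v| * (1 + Cj))) = Cj * (eta * (s * `|v|)) + eta * (s * `|v|) by ring.
  lra.
by rewrite normrM gtr0_norm // ler_pM2l.
Qed.

Lemma energy_quadratic_near_crit p (rho L Cj : R) :
  0 <= L -> 0 <= Cj -> (forall y x, `|j y x| <= Cj * `|y| * `|x|) ->
  (forall y, `|y - p| < rho -> U y) ->
  (forall a b, `|a - p| < rho -> `|b - p| < rho -> `|M b - M a| <= L * `|b - a|) ->
  forall x s, `|x - p| < rho -> `|s - p| < rho -> M s = 0 ->
    `|E x - E s| <= Cj * L * `|x - s| ^+ 2.
Proof.
move=> L0 Cj0 HCj ball_U HL x s xp sp Ms0; rewrite expr2 mulrA.
apply: (mvi_segment (O := fun z => `|z - p| < rho) (Df := fun z h => DE 1%N z [:: h])).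
  by move=> t t01; apply: norm_ball_segment.
move=> t t01 z; have zb : `|z - p| < rho by apply: norm_ball_segment.
split.
  apply: (frechet_within_subset ball_U).
  exact: (deriv_frechet HE isT (ball_U z zb)).
move=> a; rewrite grad; last exact: ball_U.
apply: (le_trans (HCj _ _)).
have hz : `|M z| <= L * `|x - s|.
  rewrite -(subr0 (M z)) -Ms0; apply: (le_trans (HL _ _ sp zb)); apply: ler_wpM2l => //.
  case/andP: t01 => t0 t1; rewrite /z addrC addKr normrZ ger0_norm //.
  by rewrite -[leRHS]mul1r; apply: ler_wpM2r.
rewrite normrZ.
have -> : Cj * L * `|x - s| * `|a| * `|x - s| = Cj * (L * `|x - s|) * (`|a| * `|x - s|) by ring.
by apply: ler_wpM2r; [rewrite mulr_ge0 | apply: ler_wpM2l].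
Qed.

End GradientMap.

Lemma quadratic_increment_const (R : realType) (u : R -> R) (K : R) :
  (forall t t', 0 <= t <= 1 -> 0 <= t' <= 1 -> `|u t' - u t| <= K * (t' - t) ^+ 2) ->
  u 1 = u 0.
Proof.
move=> uK; apply/eqP; rewrite -subr_eq0; apply/eqP.
apply: (norm_le_eps_eq0 (K := K)) => eta /andP[eta0 _].
have K0 : 0 <= K.
  have := uK 0 1; rewrite ler01 !lexx subr0 expr1n mulr1 => /(_ isT isT).
  exact: le_trans.
have [n ne] := exists_natSinv_lt eta0; set N := n.+1 in ne.
have N0 : (0 : R) < N%:R by [].
pose t (i : nat) : R := i%:R / N%:R.
have t01 i : (i <= N)%N -> 0 <= t i <= 1.
  by move=> iN; rewrite divr_ge0 //= ler_pdivrMr // mul1r ler_nat.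
have dt i : t i.+1 - t i = N%:R^-1 by rewrite /t -mulrBl -natrB // subSnn mul1r.
have -> : u 1 - u 0 = \sum_(0 <= i < N) (u (t i.+1) - u (t i)).
  by rewrite telescope_sumr // /t mul0r divff // gt_eqF.
apply: (le_trans (ler_norm_sum _ _ _)).
apply: (le_trans (y := \sum_(0 <= i < N) K / N%:R ^+ 2)).
  rewrite big_nat_cond [X in _ <= X]big_nat_cond; apply: ler_sum => i /andP[/andP[_ iN] _].
  apply: (le_trans (uK _ _ (t01 i (ltnW iN)) (t01 i.+1 iN))).
  by rewrite dt exprVn.
have -> : \sum_(0 <= i < N) K / N%:R ^+ 2 = K * N%:R^-1.
  by rewrite sumr_const_nat subn0 -mulr_natr; field; rewrite gt_eqF.
by rewrite mulrC ler_wpM2r // ltW.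
Qed.

Lemma zero_path_const (R : realType) (X Y : normedModType R) (E : X -> R) (M : X -> Y)
    (O : set X) (g : R -> X) (C L : R) :
  0 <= C -> (forall x s, O x -> O s -> M s = 0 -> `|E x - E s| <= C * `|x - s| ^+ 2) ->
  (forall t, 0 <= t <= 1 -> O (g t) /\ M (g t) = 0) ->
  (forall t t', 0 <= t <= 1 -> 0 <= t' <= 1 -> `|g t' - g t| <= L * `|t' - t|) ->
  E (g 1) = E (g 0).
Proof.
move=> C0 EC gO gL.
apply: (quadratic_increment_const (u := fun t => E (g t)) (K := C * L ^+ 2)).
move=> t t' t01 t'01; have [Ot Mt] := gO t t01; have [Ot' _] := gO t' t'01.
apply: (le_trans (EC _ _ Ot' Ot Mt)); rewrite -mulrA; apply: ler_wpM2l => //.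
have -> : L ^+ 2 * (t' - t) ^+ 2 = (L * `|t' - t|) ^+ 2.
  by rewrite -[(t' - t) ^+ 2](real_normK (num_real _)); ring.
by rewrite !expr2; apply: ler_pM => //; apply: gL.
Qed.

Section Baire.
Variables (R : realType) (U : completeNormedModType R).

Lemma cauchy_bound_lim (a : nat -> U) (r : nat -> R) :
  (forall k m, (k <= m)%N -> `|a m - a k| <= r k) ->
  (forall e, 0 < e -> exists k, r k < e) ->
  exists l, forall k, `|l - a k| <= r k.
Proof.
move=> Ha Hr; have : cvg (a @ \oo).
  suff : cauchy_ex (a @ \oo) by move/cauchy_exP/cauchy_cvg.
  move=> e e0; rewrite /fmapE -ball_normE /ball_.
  have [n rn] := Hr e e0; exists (a n), n => // m nm /=.
  by rewrite distrC; exact: le_lt_trans (Ha n m nm) rn.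
rewrite cvg_ex /= => -[l /cvgrPdist_lt Hl]; exists l => k.
apply/ler_addgt0Pr => e e0; have [N _ HN] := Hl e e0.
have := HN _ (leq_maxl N k) => /= H1.
apply: (le_trans (ler_distD (a (maxn N k)) _ _)).
by rewrite addrC; apply: lerD; [exact: Ha (leq_maxr N k) | exact: ltW].
Qed.

Lemma nested_ball_step (C F : set U) c r :
  approx_closed F -> C c -> 0 < r -> ~ (forall y, C y -> `|y - c| < r / 2 -> F y) ->
  exists c' r', [/\ C c', 0 < r', r' <= r / 2, `|c' - c| <= r / 2
    & forall z, `|z - c'| <= r' -> ~ F z].
Proof.
move=> Fcl Cc r0 /existsNP [y /not_implyP [Cy /not_implyP [yc nFy]]].
have /existsNP [rho /not_implyP [rho0 Hrho]] :
    ~ (forall e, 0 < e -> exists2 z, F z & `|y - z| < e) by move=> /Fcl.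
exists y, (Num.min (r / 2) (rho / 2)); split => //.
- by rewrite lt_min !divr_gt0.
- by rewrite ge_min lexx.
- exact: ltW.
- move=> z zy Fz; apply: Hrho; exists z => //; rewrite distrC.
  by apply: (le_lt_trans zy); rewrite gt_min ltr_pdivrMr //; apply/orP; right; lra.
Qed.

(* Baire's theorem inside a closed subset C of a complete space; the library's [Baire]
   only covers the whole space. *)
Theorem baire_approx_closed (C : set U) (F : nat -> set U) :
  approx_closed C -> (forall n, approx_closed (F n)) -> (exists c, C c) ->
  (forall y, C y -> exists n, F n y) ->
  exists n c r, [/\ C c, 0 < r & forall y, C y -> `|y - c| < r -> F n y].
Proof.
move=> Ccl Fcl [c0 Cc0] Hcov; apply/not_existsP => Hno.
pose P k (cr cr' : U * R) := [/\ C cr'.1, 0 < cr'.2, cr'.2 <= cr.2 / 2,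
  `|cr'.1 - cr.1| <= cr.2 / 2 & forall z, `|z - cr'.1| <= cr'.2 -> ~ F k z].
have step (kcr : nat * (U * R)) :
    exists cr', C kcr.2.1 /\ 0 < kcr.2.2 -> P kcr.1 kcr.2 cr'.
  case: kcr => k [c r] /=.
  have [[Cc r0]|] := pselect (C c /\ 0 < r); last by exists (c, r).
  have nloc : ~ (forall y, C y -> `|y - c| < r / 2 -> F k y).
    by move=> H; apply: (Hno k); exists c, (r / 2); split => //; exact: divr_gt0.
  by have [c' [r' HP]] := nested_ball_step (Fcl k) Cc r0 nloc; exists (c', r').
have [f Pf] := choice step.
pose fix ar k := if k is p.+1 then f (p, ar p) else (c0, 1).
have Inv k : [/\ C (ar k).1, 0 < (ar k).2 & (ar k).2 <= k.+1%:R^-1].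
  elim: k => [|k [Ck rk0 rkb]] /=; first by rewrite invr1 lexx ltr01.
  have [C1 r1 r1b _ _] := Pf (k, ar k) (conj Ck rk0); split => //.
  apply: (le_trans r1b); apply: (le_trans (y := k.+1%:R^-1 / 2)).
    by apply: ler_wpM2r => //; rewrite invr_ge0.
  rewrite -invfM lef_pV2 ?posrE ?mulr_gt0 // -natrM ler_nat.
  by rewrite muln2 -addnn addSn ltnS leq_addl.
have Step k : P k (ar k) (ar k.+1).
  by have [Ck rk0 _] := Inv k; exact: (Pf (k, ar k) (conj Ck rk0)).
have Nest k i : `|(ar (k + i)%N).1 - (ar k).1| <= (ar k).2 - (ar (k + i)%N).2.
  elim: i => [|i IH]; first by rewrite addn0 !subrr normr0.
  rewrite addnS; have [_ _ r1 d1 _] := Step (k + i)%N.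
  by apply: (le_trans (ler_distD (ar (k + i)%N).1 _ _)); lra.
have [l Hl] : exists l, forall k, `|l - (ar k).1| <= (ar k).2.
  apply: (cauchy_bound_lim (r := fun k => (ar k).2)).
    move=> k m km; rewrite -(subnKC km).
    by have := Nest k (m - k)%N; have [_ r0 _] := Inv (k + (m - k))%N; lra.
  move=> e e0; have [k ke] := exists_natSinv_lt e0; exists k.
  by have [_ _ rb] := Inv k; exact: le_lt_trans rb ke.
have Cl : C l.
  apply: Ccl => e e0; have [k ke] := exists_natSinv_lt e0; have [Ck _ rb] := Inv k.
  by exists (ar k).1 => //; exact: le_lt_trans (Hl k) (le_lt_trans rb ke).
have [n Fn] := Hcov l Cl; have [_ _ _ _ nF] := Step n.
by apply: (nF l) => //; exact: Hl.
Qed.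

End Baire.

Section ClosedRange.
Variables (R : realType) (X Y : completeNormedModType R) (A : X -> Y) (cA : R).
Hypotheses (Alin : linear A) (cA0 : 0 <= cA) (Abd : forall v, `|A v| <= cA * `|v|).
Hypothesis Acl : approx_closed (range A).

Definition approx_image_ball (n : R) (y : Y) :=
  forall e, 0 < e -> exists2 v, `|v| <= n & `|y - A v| < e.

Lemma range_baire_ball : exists n c r, [/\ range A c, 0 < r &
  forall y, range A y -> `|y - c| < r -> approx_image_ball n%:R y].
Proof.
apply: baire_approx_closed => //.
- move=> k y Hy e e0.
  have [z Fz yz] := Hy (e / 2) (divr_gt0 e0 (ltr0Sn _ 1)).
  have [v vn zv] := Fz (e / 2) (divr_gt0 e0 (ltr0Sn _ 1)).
  by exists v => //; apply: (le_lt_trans (ler_distD z _ _)); lra.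
- by exists (A 0), 0.
- move=> y [v _ <-]; exists (Num.truncn `|v|).+1 => e e0.
  by exists v; [exact: ltW (truncnS_gt _) | rewrite subrr normr0].
Qed.

Lemma approx_preimage : exists2 C0, 0 <= C0 & forall y, range A y ->
  forall e, 0 < e -> exists2 v, `|v| <= C0 * `|y| & `|y - A v| < e.
Proof.
have [n [c [r [[u _ Auc] r0 Hcr]]]] := range_baire_ball.
exists (4 * n%:R / r); first by apply: divr_ge0 => //; exact: ltW.
move=> y [w _ Awy] e e0.
have [->|yn0] := eqVneq y 0.
  by exists 0; rewrite ?(linfun0 Alin) ?subrr !normr0 ?mulr0.
have ny0 : 0 < `|y| by rewrite normr_gt0.
pose s := r / (2 * `|y|).
have s0 : 0 < s by rewrite /s divr_gt0 // mulr_gt0.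
have sy : `|s *: y| = r / 2 by rewrite normrZ gtr0_norm // /s; field; rewrite gt_eqF.
have Cc' : range A (c + s *: y).
  by exists (u + s *: w) => //; rewrite (linfunD Alin) (linfunZ Alin) Auc Awy.
have es0 : 0 < e * s / 2 by rewrite divr_gt0 // mulr_gt0.
have [v1 v1n H1] := Hcr _ Cc' (ltac:(by rewrite addrC addKr sy; lra)) _ es0.
have [v2 v2n H2] := Hcr c (ex_intro2 _ _ u I Auc) (ltac:(by rewrite subrr normr0)) _ es0.
exists (s^-1 *: (v1 - v2)).
  rewrite normrZ gtr0_norm ?invr_gt0 //.
  have -> : 4 * n%:R / r * `|y| = s^-1 * (2 * n%:R) by rewrite /s; field; rewrite ?gt_eqF.
  rewrite ler_pM2l ?invr_gt0 //; apply: (le_trans (ler_normB _ _)); lra.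
have key : (c + s *: y - A v1) - (c - A v2) = s *: (y - A (s^-1 *: (v1 - v2))).
  rewrite subrACA [c + _]addrC addrK (linfunZ Alin) (linfunB Alin) scalerBr scalerA.
  by rewrite mulfV ?gt_eqF // scale1r.
have : `|s *: (y - A (s^-1 *: (v1 - v2)))| < s * e.
  rewrite -key; apply: (le_lt_trans (ler_normB _ _)).
  have -> : s * e = e * s / 2 + e * s / 2 by field.
  exact: ltrD H1 H2.
by rewrite normrZ gtr0_norm // ltr_pM2l.
Qed.

Lemma approx_preimage_fun (C0 : R) :
  (forall y, range A y -> forall e, 0 < e -> exists2 v, `|v| <= C0 * `|y| & `|y - A v| < e) ->
  exists g : Y * R -> X, forall y e, range A y -> 0 < e ->
    `|g (y, e)| <= C0 * `|y| /\ `|y - A (g (y, e))| < e.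
Proof.
move=> approx.
suff /choice [g Hg] : forall ye : Y * R, exists v, range A ye.1 -> 0 < ye.2 ->
    `|v| <= C0 * `|ye.1| /\ `|ye.1 - A v| < ye.2.
  by exists g => y e; apply: (Hg (y, e)).
move=> [y e] /=; have [[Cy e0]|nCy] := pselect (range A y /\ 0 < e).
  by have [v v1 v2] := approx y Cy e e0; exists v.
by exists 0 => Cy e0; exfalso; apply: nCy.
Qed.

(* The preimage is the limit of successive corrections, each solving the residual
   equation up to half of its size. *)
Lemma exact_preimage (C0 : R) : 0 <= C0 ->
  (forall y, range A y -> forall e, 0 < e -> exists2 v, `|v| <= C0 * `|y| & `|y - A v| < e) ->
  forall y, range A y -> exists2 v, A v = y & `|v| <= 2 * C0 * `|y|.
Proof.
move=> C00 /approx_preimage_fun [g Hg] y [v0 _ Av0].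
have [->|yn0] := eqVneq y 0; first by exists 0; rewrite ?(linfun0 Alin) ?normr0 ?mulr0.
pose q (k : nat) := `|y| / 2 ^+ k.
have q0 k : 0 < q k by rewrite /q divr_gt0 ?normr_gt0 // exprn_gt0.
have qS k : q k.+1 = q k / 2 by rewrite /q exprS; field; rewrite expf_neq0.
pose fix w k := if k is p.+1 then w p + g (y - A (w p), q p.+1) else 0.
have Cres k : range A (y - A (w k)) by exists (v0 - w k); rewrite // (linfunB Alin) Av0.
have Res k : `|y - A (w k)| <= q k.
  elim: k => [|k IH] /=; first by rewrite (linfun0 Alin) subr0 /q expr0 divr1.
  have [_ h] := Hg _ _ (Cres k) (q0 k.+1).
  by rewrite (linfunD Alin) opprD addrA; apply: ltW.
have Inc k : `|w k.+1 - w k| <= C0 * q k.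
  rewrite /= addrC addKr; have [h _] := Hg _ _ (Cres k) (q0 k.+1).
  by apply: (le_trans h); rewrite ler_wpM2l.
have Nest k i : `|w (k + i)%N - w k| <= 2 * C0 * (q k - q (k + i)%N).
  elim: i => [|i IH]; first by rewrite addn0 !subrr normr0 mulr0.
  rewrite addnS; apply: (le_trans (ler_distD (w (k + i)%N) _ _)).
  have := lerD (Inc (k + i)%N) IH; rewrite qS => h; apply: (le_trans h).
  by rewrite le_eqVlt; apply/orP; left; apply/eqP; field.
have [l Hl] : exists l, forall k, `|l - w k| <= 2 * C0 * q k.
  apply: cauchy_bound_lim => [k m km|e e0].
    rewrite -(subnKC km); apply: (le_trans (Nest k (m - k)%N)).
    by rewrite ler_wpM2l ?mulr_ge0 // gerBl ltW.
  by have [k hk] := exists_div_exp2_lt (2 * C0 * `|y|) e0; exists k; rewrite /q mulrA.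
exists l; last by have := Hl 0%N; rewrite /= subr0 /q expr0 divr1.
apply/eqP; rewrite -subr_eq0; apply/eqP.
apply: (norm_le_eps_eq0 (K := 1 + cA * (2 * C0))) => eta /andP[eta0 _].
have [k hk] := exists_div_exp2_lt `|y| eta0.
have h1 : `|A l - A (w k)| <= cA * (2 * C0 * q k).
  by rewrite -(linfunB Alin); apply: (le_trans (Abd _)); rewrite ler_wpM2l.
apply: (le_trans (ler_distD (A (w k)) _ _)); rewrite [`|A (w k) - y|]distrC addrC.
apply: (le_trans (lerD (Res k) h1)).
have -> : q k + cA * (2 * C0 * q k) = q k * (1 + cA * (2 * C0)) by ring.
by rewrite ler_wpM2r ?addr_ge0 ?mulr_ge0 // ltW.
Qed.

Lemma closed_range_ker_dist : exists2 C, 0 < C &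
  forall v, exists k, A k = 0 /\ `|v - k| <= C * `|A v|.
Proof.
have [C0 C00 approx] := approx_preimage.
exists (2 * C0 + 1); first by rewrite ltr_wpDl ?mulr_ge0.
move=> v; have [u Au nu] := exact_preimage C00 approx (ex_intro2 _ _ v I erefl).
exists (v - u); rewrite (linfunB Alin) Au subrr opprB addrC subrK; split => //.
by apply: (le_trans nu); rewrite ler_wpM2r // lerDl.
Qed.

End ClosedRange.

Section MorseBott.
Variables (R : realType) (X Y : completeNormedModType R) (j : Y -> X -> R) (U : set X).
Variables (E : X -> R) (DE : nat -> X -> seq X -> R).
Variables (M : X -> Y) (DM : nat -> X -> seq X -> Y) (p : X).
Hypotheses (Hj : continuous_embedding_dual j) (oU : open U) (Up : U p).
Hypotheses (HE : deriv_data 2 U E DE) (Hcrit : forall v, DE 1%N p [:: v] = 0).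
Hypotheses (HM : deriv_data 1 U M DM) (Hgrad : gradient_map j U DE M).
Variables (Vs Ws : set X) (phi psi : X -> X) (Dphi : nat -> X -> seq X -> X) (F : set X).
Hypothesis Hchart : submanifold_chart (crit_set U DE) p Vs Ws phi psi Dphi F.
Hypothesis HT : hessian_kernel DE p = [set v | F (Dphi 1%N p [:: v])].

Local Notation S := (crit_set U DE).
Local Notation A := (fun h => DM 1%N p [:: h]).

Lemma crit_gradient_eq0 s : S s -> M s = 0.
Proof.
move=> [Us Hs]; case: Hj => _ _ _; apply => x.
by case: Hgrad => _ H; rewrite -H.
Qed.

Lemma crit_base : S p.
Proof. by split. Qed.

Lemma chart_crit g : Ws g -> F g -> S (psi g).
Proof.
move=> Wg Fg; have [_ [Hinv1 _ _ Himg]] := Hchart.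
have : (phi @` (S `&` Vs)) g by rewrite Himg.
by case=> s [Ss Vss] <-; have [_ ->] := Hinv1 s Vss.
Qed.

Lemma crit_chart s : S s -> Vs s -> F (phi s).
Proof.
move=> Ss Vss; have [_ [_ _ _ Himg]] := Hchart.
by have [] : (Ws `&` F) (phi s) by rewrite -Himg; exists s.
Qed.

Lemma gradient_ker_chart k : A k = 0 -> F (Dphi 1%N p [:: k]).
Proof.
move=> Ak; rewrite -[F _]/([set v | F (Dphi 1%N p [:: v])] k) -HT => w.
rewrite (hessian_gradient Hj oU HE HM Hgrad.2 Up) Ak.
exact: (linfun0 (dual_embedding_linear Hj w)).
Qed.

Lemma crit_taylor : exists2 rT, 0 < rT & exists2 CT, 0 <= CT &
  forall x s, `|x - p| < rT -> `|s - p| < rT -> M s = 0 -> `|E x - E s| <= CT * `|x - s| ^+ 2.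
Proof.
have [cA cA0 HcA] := deriv1_bounded HM isT Up.
have [rM rM0 [BM UM]] := deriv_strict HM oU Up ltr01.
have [Cj Cj0 HCj] := dual_embedding_bound Hj.
exists rM => //; exists (Cj * (cA + 1)); first by rewrite mulr_ge0 ?addr_ge0.
exact: (energy_quadratic_near_crit HE Hgrad.2 (addr_ge0 cA0 ler01) Cj0 HCj BM
  (strict_lipschitz HcA UM)).
Qed.

(* The witness is psi (phi s + phi'(p) k): by [gradient_ker_chart] it stays in the
   flat part F of the chart, hence in S. *)
Lemma crit_move : exists2 rho, 0 < rho & forall s k, S s -> `|s - p| < rho ->
  A k = 0 -> `|k| < rho -> exists s', S s' /\ `|s' - s - k| <= `|k| / 8.
Proof.
have [[oV Vp oW Hphi [Dpsi Hpsi]] [Hinv1 _ [[_ Flin] _] _]] := Hchart.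
have [Wf0 psif0] := Hinv1 p Vp; set f0 := phi p in Wf0 psif0.
pose B h := Dphi 1%N p [:: h].
have Blin : linear B := deriv1_linear (Hphi 1%N) isT Vp.
have [cB cB0 HcB] := deriv1_bounded (Hphi 1%N) isT Vp.
have [cQ cQ0 HcQ] := deriv1_bounded (Hpsi 1%N) isT Wf0.
have chain := frechet_left_inverse Blin (deriv1_linear (Hpsi 1%N) isT Wf0) cB0 cQ0 HcB HcQ
  oV Vp (deriv_frechet (Hphi 1%N) isT Vp) (deriv_frechet (Hpsi 1%N) isT Wf0) Hinv1.
have cB1 : 0 < cB + 1 by rewrite ltr_wpDl.
have eps0 : 0 < (8 * (cB + 1))^-1 by rewrite invr_gt0 mulr_gt0.
have [rpsi rpsi0 [Bpsi Upsi]] := deriv_strict (Hpsi 1%N) oW Wf0 eps0.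
have [rphi rphi0 [Bphi Uphi]] := deriv_strict (Hphi 1%N) oV Vp ltr01.
have r0 : 0 < rpsi / (2 * (cB + 1)) by rewrite divr_gt0 // mulr_gt0.
exists (Num.min rphi (rpsi / (2 * (cB + 1)))); first by rewrite lt_min rphi0.
move=> s k Ss; rewrite lt_min => /andP[sp1 sp2] Ak; rewrite lt_min => /andP[_ kp].
have p0 : `|p - p| < rphi by rewrite subrr normr0.
have nphi : `|phi s - f0| < rpsi / 2.
  apply: (le_lt_trans (strict_lipschitz HcB Uphi p0 sp1)).
  move: sp2; rewrite ltr_pdivlMr ?mulr_gt0 // => sp2.
  rewrite ltr_pdivlMr //; have : (cB + 1) * `|s - p| * 2 = `|s - p| * (2 * (cB + 1)) by ring.
  lra.
have nBk : `|B k| < rpsi / 2.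
  apply: (le_lt_trans (HcB k)); move: kp; rewrite ltr_pdivlMr ?mulr_gt0 // => kp.
  rewrite ltr_pdivlMr //; have := normr_ge0 k.
  have : `|k| * (2 * (cB + 1)) = cB * `|k| * 2 + 2 * `|k| by ring.
  lra.
set g := phi s + B k.
have gf0 : `|g - f0| < rpsi.
  have : `|g - f0| <= `|phi s - f0| + `|B k| by rewrite /g addrAC ler_normD.
  lra.
exists (psi g); split.
  by apply: chart_crit; [apply: Bpsi | rewrite /g -[phi s]scale1r; apply: Flin => //;
    [apply: crit_chart => //; apply: Bphi | apply: gradient_ker_chart]].
have := Upsi (phi s) g (ltac:(lra)) gf0.
have -> : g - phi s = B k by rewrite /g addrC addKr.
have [_ ->] := Hinv1 s (Bphi s sp1); rewrite chain => h.
apply: (le_trans h); apply: (le_trans (ler_wpM2l (ltW eps0) (HcB k))).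
have -> : (8 * (cB + 1))^-1 * (cB * `|k|) = cB / (cB + 1) * (`|k| / 8).
  by field; rewrite gt_eqF.
rewrite -[leRHS]mul1r; apply: ler_wpM2r; first by rewrite divr_ge0.
by rewrite ler_pdivrMr // mul1r lerDl.
Qed.

Lemma crit_path e : 0 < e -> exists2 rho, 0 < rho & forall s, S s -> `|s - p| < rho ->
  exists2 L, 0 <= L & exists g : R -> X, [/\ g 0 = p, g 1 = s,
    forall t, 0 <= t <= 1 -> S (g t) /\ `|g t - p| < e
  & forall t t', 0 <= t <= 1 -> 0 <= t' <= 1 -> `|g t' - g t| <= L * `|t' - t|].
Proof.
have [[oV Vp oW Hphi [Dpsi Hpsi]] [Hinv1 _ [[_ Flin] _] _]] := Hchart.
have [Wf0 psif0] := Hinv1 p Vp; set f0 := phi p in Wf0 psif0.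
have Ff0 : F f0 := crit_chart crit_base Vp.
have [cB cB0 HcB] := deriv1_bounded (Hphi 1%N) isT Vp.
have [cQ cQ0 HcQ] := deriv1_bounded (Hpsi 1%N) isT Wf0.
have [rpsi rpsi0 [Bpsi Upsi]] := deriv_strict (Hpsi 1%N) oW Wf0 ltr01.
have [rphi rphi0 [Bphi Uphi]] := deriv_strict (Hphi 1%N) oV Vp ltr01.
have LipPsi := strict_lipschitz HcQ Upsi; have LipPhi := strict_lipschitz HcB Uphi.
move=> e0; have cQ2 : 0 < cQ + 2 by rewrite ltr_wpDl.
set rp := Num.min rpsi (e / (cQ + 2)).
have rp0 : 0 < rp by rewrite lt_min rpsi0 divr_gt0.
have rp_psi : rp <= rpsi by rewrite ge_min lexx.
have rpe : (cQ + 1) * rp < e.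
  have : rp * (cQ + 2) <= e by rewrite -ler_pdivlMr // ge_min lexx orbT.
  have : (cQ + 1) * rp + rp = rp * (cQ + 2) by ring.
  lra.
have cB1 : 0 < cB + 1 by rewrite ltr_wpDl.
exists (Num.min rphi (rp / (cB + 1))); first by rewrite lt_min rphi0 divr_gt0.
move=> s Ss; rewrite lt_min => /andP[sp1 sp2].
have p0 : `|p - p| < rphi by rewrite subrr normr0.
set D := `|phi s - f0|.
have Drp : D < rp.
  by apply: (le_lt_trans (LipPhi p s p0 sp1)); rewrite mulrC -ltr_pdivlMr.
exists ((cQ + 1) * D); first exact: mulr_ge0 (addr_ge0 cQ0 ler01) (normr_ge0 _).
pose seg t := f0 + t *: (phi s - f0).
have seg_f0 t : 0 <= t <= 1 -> `|seg t - f0| < rp.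
  move=> /andP[t0 t1]; rewrite /seg addrC addKr normrZ ger0_norm //.
  by apply: (le_lt_trans _ Drp); rewrite -[leRHS]mul1r ler_wpM2r.
exists (fun t => psi (seg t)); split.
- by rewrite /seg scale0r addr0.
- by rewrite /seg scale1r addrC subrK; have [_ ->] := Hinv1 s (Bphi s sp1).
- move=> t t01; have segW := lt_le_trans (seg_f0 t t01) rp_psi; split.
    apply: chart_crit; first exact: Bpsi segW.
    have -> : seg t = t *: phi s + ((- t) *: f0 + f0).
      by rewrite /seg scalerBr scaleNr addrCA [f0 - _]addrC.
    by apply: (Flin); [exact: crit_chart Ss (Bphi s sp1) | exact: Flin].
  rewrite -psif0; apply: (le_lt_trans (LipPsi f0 _ _ segW)); first by rewrite subrr normr0.
  by apply: (le_lt_trans _ rpe); rewrite ler_wpM2l ?addr_ge0 // ltW // seg_f0.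
- move=> t t' t01 t'01.
  apply: (le_trans (LipPsi _ _ (lt_le_trans (seg_f0 t t01) rp_psi)
    (lt_le_trans (seg_f0 t' t'01) rp_psi))).
  have -> : seg t' - seg t = (t' - t) *: (phi s - f0).
    by rewrite /seg scalerBl opprD addrACA subrr add0r.
  by rewrite normrZ -/D [`|t' - t| * D]mulrC mulrA lexx.
Qed.

Lemma crit_energy_const : exists2 rho, 0 < rho & forall s, S s -> `|s - p| < rho -> E s = E p.
Proof.
have [rT rT0 [CT CT0 Tay]] := crit_taylor.
have [rho rho0 Hpath] := crit_path rT0; exists rho => // s Ss sp.
have [L _ [g [g0 g1 gS gL]]] := Hpath s Ss sp.
rewrite -g1 -g0; apply: (zero_path_const (O := fun y => `|y - p| < rT) CT0 Tay _ gL).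
by move=> t /gS [St near]; split => //; exact: crit_gradient_eq0.
Qed.

Section CritDistance.
Variable r : R.
Hypothesis r0 : 0 < r.

Definition crit_dist x := inf [set `|x - s| | s in [set s | S s /\ `|s - p| < r]].

Lemma crit_dist_has_inf x : has_inf [set `|x - s| | s in [set s | S s /\ `|s - p| < r]].
Proof.
split; first by exists `|x - p|, p => //; split; [exact: crit_base | rewrite subrr normr0].
by exists 0 => _ [s _ <-].
Qed.

Lemma crit_dist_le x s : S s -> `|s - p| < r -> crit_dist x <= `|x - s|.
Proof. by move=> Ss sp; apply: ge_inf; [case: (crit_dist_has_inf x) | exists s]. Qed.

Lemma crit_dist_ge0 x : 0 <= crit_dist x.
Proof. by apply: lb_le_inf; [case: (crit_dist_has_inf x) | move=> _ [s _ <-]]. Qed.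

Lemma crit_dist_adherent x e : 0 < e ->
  exists s, [/\ S s, `|s - p| < r & `|x - s| < crit_dist x + e].
Proof.
move=> e0; have [_ [s [Ss sp] <-] xs] := inf_adherent e0 (crit_dist_has_inf x).
by exists s.
Qed.

Lemma energy_le_crit_dist x (CT : R) : 0 <= CT ->
  (forall s, S s -> `|s - p| < r -> E s = E p /\ `|E x - E s| <= CT * `|x - s| ^+ 2) ->
  `|E x - E p| <= CT * crit_dist x ^+ 2.
Proof.
move=> CT0 HEs; set d := crit_dist x; have d0 : 0 <= d := crit_dist_ge0 x.
apply: (ler_eps_mul (K := CT * (2 * d + 1))) => eta /andP[eta0 eta1].
have [s [Ss sp xs]] := crit_dist_adherent x eta0; have [<- Exs] := HEs s Ss sp.
apply: (le_trans Exs).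
have : CT * `|x - s| ^+ 2 <= CT * (d + eta) ^+ 2.
  by apply: ler_wpM2l => //; rewrite !expr2; apply: ler_pM => //; apply: ltW.
have : eta * (CT * (2 * d + eta)) <= eta * (CT * (2 * d + 1)).
  by apply: ler_wpM2l; [exact: ltW | apply: ler_wpM2l => //; rewrite lerD2l].
have : CT * (d + eta) ^+ 2 = CT * d ^+ 2 + eta * (CT * (2 * d + eta)) by ring.
have : eta * (CT * (2 * d + 1)) = CT * (2 * d + 1) * eta by ring.
lra.
Qed.

Lemma gradient_ge_crit_dist x (c CA : R) : 0 < c -> 0 <= CA -> CA * c <= 1 / 4 ->
  (forall v, exists k, A k = 0 /\ `|v - k| <= CA * `|A v|) ->
  (forall s k, S s -> `|s - p| < r -> A k = 0 -> `|k| < r ->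
     exists s', S s' /\ `|s' - s - k| <= `|k| / 8) ->
  (forall s, S s -> `|s - p| < r -> `|M x - M s - A (x - s)| <= c / 2 * `|x - s|) ->
  `|x - p| < r / 8 -> c / 2 * crit_dist x <= `|M x|.
Proof.
move=> c0 CA0 cCA HCA Hmove HMs xp; set d := crit_dist x.
have [dz|dpos] := eqVneq d 0; first by rewrite dz mulr0.
have dp : 0 < d by rewrite lt_neqAle eq_sym dpos crit_dist_ge0.
have dxp : d <= `|x - p| by apply: crit_dist_le; [exact: crit_base | rewrite subrr normr0].
have [s [Ss sp xs]] := crit_dist_adherent x dp; set v := x - s in xs.
have dv : d <= `|v| by exact: crit_dist_le.
have sp3 : `|s - p| < 3 * r / 8.
  have : `|s - p| <= `|s - x| + `|x - p| by apply: ler_distD.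
  rewrite (distrC s x) -/v; lra.
have key : c * `|v| <= `|A v|.
  rewrite leNgt; apply/negP => hlt; have [k [Ak hk]] := HCA v.
  have hk' : `|v - k| <= `|v| / 4.
    apply: (le_trans hk); have : CA * `|A v| <= CA * (c * `|v|) by apply: ler_wpM2l => //; apply: ltW.
    have : CA * (c * `|v|) = CA * c * `|v| by ring.
    have : CA * c * `|v| <= 1 / 4 * `|v| by apply: ler_wpM2r.
    lra.
  have nk : `|k| <= 5 / 4 * `|v|.
    have : `|k| <= `|v| + `|v - k|.
      by rewrite {1}(_ : k = v - (v - k)) ?ler_normB // opprB addrC subrK.
    lra.
  have [s' [Ss' hs']] := Hmove s k Ss (ltac:(lra)) Ak (ltac:(lra)).
  have s'p : `|s' - p| < r.
    have : `|s' - p| <= `|s' - s - k| + `|k| + `|s - p|.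
      have -> : s' - p = (s' - s - k) + k + (s - p) by rewrite subrK addrA subrK.
      by apply: (le_trans (ler_normD _ _)); rewrite lerD2r ler_normD.
    lra.
  have := crit_dist_le x Ss' s'p.
  have : `|x - s'| <= `|v - k| + `|s' - s - k|.
    have -> : x - s' = (v - k) - (s' - s - k) by rewrite /v opprB addrA subrK opprB addrA subrK.
    exact: ler_normB.
  lra.
have hM := HMs s Ss (ltac:(lra)); rewrite (crit_gradient_eq0 Ss) subr0 -/v in hM.
have : `|A v| <= `|M x| + `|M x - A v|.
  by rewrite {1}(_ : A v = M x - (M x - A v)) ?ler_normB // opprB addrC subrK.
have : c / 2 * d <= c / 2 * `|v| by apply: ler_wpM2l; rewrite ?divr_ge0 // ltW.
have : c / 2 * `|v| + c / 2 * `|v| = c * `|v| by field.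
lra.
Qed.

End CritDistance.

Hypothesis Hran : closed (range A).

Lemma gradient_inequality : exists (Z sigma : R), [/\ 0 < Z, 0 < sigma, sigma <= 1 &
  forall x, U x -> `|x - p| < sigma -> Z * Num.sqrt `|E x - E p| <= `|M x| ].
Proof.
have [cA cA0 HcA] := deriv1_bounded HM isT Up.
have [CA CA0 HCA] := closed_range_ker_dist (deriv1_linear HM isT Up) cA0 HcA
  (closed_approx_closed Hran).
set c := (4 * CA)^-1.
have c0 : 0 < c by rewrite invr_gt0 mulr_gt0.
have cCA : CA * c <= 1 / 4 by rewrite /c invfM mulrCA mulfV ?gt_eqF // mulr1 mul1r.
have [rM rM0 [_ UM]] := deriv_strict HM oU Up (ltac:(by rewrite divr_gt0) : 0 < c / 2).
have [rT rT0 [CT CT0 Tay]] := crit_taylor.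
have [rho1 rho10 Hmove] := crit_move.
have [rho2 rho20 Hconst] := crit_energy_const.
set r := Num.min (Num.min rM rT) (Num.min rho1 rho2) / 2.
have r0 : 0 < r by rewrite divr_gt0 // !lt_min rM0 rT0 rho10 rho20.
have [rM' rT' r1 r2] : [/\ r < rM, r < rT, r < rho1 & r < rho2].
  have h : Num.min (Num.min rM rT) (Num.min rho1 rho2) / 2 <
    Num.min (Num.min rM rT) (Num.min rho1 rho2).
    by rewrite ltr_pdivrMr // ltr_pMr // ?ltr1n // !lt_min rM0 rT0 rho10 rho20.
  by move: h; rewrite -/r !lt_min => /andP[/andP[-> ->] /andP[-> ->]].
set sigma := Num.min 1 (r / 8).
exists (c / 2 / (Num.sqrt CT + 1)), sigma; split.
- by rewrite !divr_gt0 // ltr_wpDl.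
- by rewrite lt_min ltr01 divr_gt0.
- by rewrite ge_min lexx.
move=> x Ux xp; have xr : `|x - p| < r / 8 by apply: (lt_le_trans xp); rewrite ge_min lexx orbT.
have xr' : `|x - p| < r by lra.
have Ebound := energy_le_crit_dist r0 CT0 (fun s Ss sp =>
  conj (Hconst s Ss (lt_trans sp r2))
       (Tay x s (lt_trans xr' rT') (lt_trans sp rT') (crit_gradient_eq0 Ss))).
have Mbound := gradient_ge_crit_dist r0 c0 (ltW CA0) cCA HCA
  (fun s k Ss sp Ak kr => Hmove s k Ss (lt_trans sp r1) Ak (lt_trans kr r1))
  (fun s Ss sp => UM s x (lt_trans sp rM') (lt_trans xr' rM')) xr.
have c20 : 0 < c / 2 by rewrite divr_gt0.
exact: scaled_sqrt_le CT0 (crit_dist_ge0 r0 x) c20 Ebound Mbound.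
Qed.

End MorseBott.

Unset Implicit Arguments. Set Strict Implicit. Set Printing Implicit Defensive.

Theorem corollary4 (R : realType) (X Y : completeNormedModType R)
  (j : Y -> X -> R) (U : set X) (E : X -> R) (DE : nat -> X -> seq X -> R)
  (M : X -> Y) (DM : nat -> X -> seq X -> Y) (xinf : X) :
  continuous_embedding_dual j ->
  open U -> U xinf ->
  deriv_data 2 U E DE ->
  (forall v, DE 1%N xinf [:: v] = 0) ->
  deriv_data 1 U M DM ->
  gradient_map j U DE M ->
  morse_bott_at U DE xinf ->
  (exists X0 : set X, closed_complement (hessian_kernel DE xinf) X0) ->
  closed (range (fun v : X => DM 1%N xinf [:: v])) ->
  exists (Z sigma : R), [/\ 0 < Z, 0 < sigma, sigma <= 1 &
    forall x, U x -> `|x - xinf| < sigma ->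
      Z * Num.sqrt `|E x - E xinf| <= `|M x| ].
Proof.
move=> Hj oU Ux HE Hcrit HM Hgrad [_ [V [W [phi [psi [Dphi [F [chart HT]]]]]]]] _ Hran.
exact: (gradient_inequality Hj oU Ux HE Hcrit HM Hgrad chart HT Hran).
Qed.
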